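(* Let $s$ be a positive integer. For each $\mathbf{i}\in\mathbb{Z}_{\ge 0}^h$ with $|\mathbf{i}|\le s$ there is a unique $\Omega_{s,\mathbf{i}}\in\mathcal{R}$ with $\deg_{\mathcal{H}}\Omega_{s,\mathbf{i}}\le \deg_{\mathcal{H}}\Lambda_s+|\mathbf{i}|(2g-1)$ such that $$\Lambda_s(\mathbf{f}-\mathbf{R})^{\mathbf{i}}=G^{|\mathbf{i}|}\,\Omega_{s,\mathbf{i}}.$$
   Context: Let $q$ be a prime power. The Hermitian curve over $\mathbb{F}_{q^2}$ is the smooth projective plane curve with affine equation $Y^q+Y=X^{q+1}$; it has genus $g=\tfrac12 q(q-1)$, $n=q^3$ affine rational points $P_1,\dots,P_n$ and the point at infinity $P_\infty$. Let $\mathcal{R}=\bigcup_{m\ge0}\mathcal{L}(mP_\infty)=\mathbb{F}_{q^2}[X,Y]/(Y^q+Y-X^{q+1})$ with basis $\{X^iY^j: i\ge0,0\le j<q\}$; $\deg_{\mathcal{H}} f=-v_{P_\infty}(f)$ ($v_P$ the valuation at $P$), so $\deg_{\mathcal{H}}(X^iY^j)=iq+j(q+1)$; $f\neq 0$ is monic if the coefficient of its basis monomial of largest $\deg_{\mathcal{H}}$ is $1$. Fix integers $h\ge1$ and $m_{\mathrm H}$ with $2(g-1)<m_{\mathrm H}<n$. Let $\mathbf{f}=(f_1,\dots,f_h)\in\mathcal{L}(m_{\mathrm H}P_\infty)^h$ and let $\mathbf{r}=\mathbf{c}+\mathbf{e}\in\mathbb{F}_{q^2}^{h\times n}$, where $\mathbf{c}$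 has $i$-th row $(f_i(P_1),\dots,f_i(P_n))$, and let $\mathcal{E}\subseteq\{1,\dots,n\}$ be the set of indices of nonzero columns of $\mathbf{e}$. Let $\Lambda_s$ be the unique monic element of minimal $\deg_{\mathcal{H}}$ of $\{\Lambda\in\mathcal{R}: v_{P_i}(\Lambda)\ge s\ \forall i\in\mathcal{E}\}$. Let $\mathbf{R}=(R_1,\dots,R_h)\in\mathcal{R}^h$ with $\deg_{\mathcal{H}}R_i<n+2g$ and $R_i(P_j)=r_{i,j}$ for all $i,j$. Let $G=\prod_{\alpha\in\mathbb{F}_{q^2}}(X-\alpha)=X^{q^2}-X$. For $\mathbf{i}\in\mathbb{Z}_{\ge0}^h$: $|\mathbf{i}|=\sum_\mu i_\mu$, and for $\mathbf{a}\in\mathcal{R}^h$, $\mathbf{a}^{\mathbf{i}}=\prod_\mu a_\mu^{i_\mu}$. *)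

From HB Require Import structures.
From mathcomp Require Import all_boot all_order all_algebra.
Set Implicit Arguments. Unset Strict Implicit. Unset Printing Implicit Defensive.
Import Order.TTheory GRing.Theory Num.Theory.
Local Open Scope ring_scope.

(* Elements of R = F[X,Y]/(Y^q+Y-X^(q+1)) are represented by bivariate
   polynomials p : {poly {poly F}}: the OUTER variable is Y, the coefficients
   are polynomials in X. *)

Section Hermitian.
Variables (F : finFieldType) (q : nat).

Definition hX : {poly {poly F}} := ('X)%:P.
Definition hY : {poly {poly F}} := 'X.
Definition hH : {poly {poly F}} := hY ^+ q + hY - hX ^+ q.+1.

Definition hred (p : {poly {poly F}}) : {poly {poly F}} := p %% hH.

Definition eqH (p1 p2 : {poly {poly F}}) : Prop := hred (p1 - p2) = 0.

Definition hcoef (p : {poly {poly F}}) (j : nat) : {poly F} := (hred p)`_j.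

(* deg_H, with the convention deg_H 0 = 0 *)
Definition degH (p : {poly {poly F}}) : nat :=
  \max_(j < size (hred p))
    \max_(i < size (hcoef p j) | ((hcoef p j)`_i != 0)%R) (i * q + j * q.+1)%N.

Definition monicH (p : {poly {poly F}}) : Prop :=
  hred p != 0 /\
  forall i j : nat, (hcoef p j)`_i != 0 -> (i * q + j * q.+1)%N = degH p ->
    (hcoef p j)`_i = 1.

Definition hev (p : {poly {poly F}}) (a b : F) : F := (p.[b%:P]).[a].

Definition hpred : pred (F * F) :=
  fun ab => ab.2 ^+ q + ab.2 == ab.1 ^+ q.+1.
Definition hpoint := {ab : F * F | hpred ab}.

Definition hevP (p : {poly {poly F}}) (P : hpoint) : F :=
  hev p (val P).1 (val P).2.

(* v_P(p) >= s, i.e. p lies in m_P^s O_P, where O_P is the local ring of R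
   at P = (a,b) and m_P = (X - a, Y - b):  there is u in R with u(P) <> 0 and
   u p in the ideal m_P^s of R (generated by (X-a)^k (Y-b)^(s-k)). *)
Definition vge (p : {poly {poly F}}) (P : hpoint) (s : nat) : Prop :=
  let a := (val P).1 in let b := (val P).2 in
  exists (u d : {poly {poly F}}) (c : 'I_s.+1 -> {poly {poly F}}),
    hevP u P != 0 /\
    u * p = \sum_(k < s.+1) c k * (hX - (a%:P)%:P) ^+ k * (hY - (b%:P)%:P) ^+ (s - k)
            + d * hH.

(* G = prod_{alpha in F} (X - alpha) = X^(q^2) - X *)
Definition hG : {poly {poly F}} := hX ^+ (q ^ 2)%N - hX.

End Hermitian.

Definition genus (q : nat) : nat := (q * (q - 1)) %/ 2.

(* The product Lam (f - R)^i vanishes to order at least |i| at every affine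
   point P: at an error position because Lam vanishes there to order s >= |i|,
   elsewhere because every f_mu - R_mu vanishes at P.  An element of R that
   vanishes at every affine point is a multiple of G = prod_alpha (X - alpha):
   its reduced form has Y-degree < q, while each fibre X = alpha carries q
   points.  Since X - alpha is a local parameter at every point above alpha,
   the quotient vanishes to one order less, and induction yields G^|i|.
   Uniqueness holds because G^|i| lies in F[X] \ {0}, which contains no zero
   divisor of R.  For the degree bound, deg_H (f_mu - R_mu) <= q^3 + 2g - 1,
   deg_H is subadditive, and multiplying by G^|i| raises deg_H by |i| q^3. *)

From HB Require Import structures.
From mathcomp Require Import all_boot all_order all_algebra.
From mathcomp Require Import finfield abelian pgroup.
From mathcomp Require Import ring zify.
Import GRing.Theory.
Local Open Scope ring_scope.
Set Implicit Arguments. Unset Strict Implicit. Unset Printing Implicit Defensive.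

Section PowIdeal.
Variables (R : comNzRingType) (x y : R).

Fixpoint in_pow_ideal (k : nat) (z : R) : Prop :=
  if k is k'.+1 then
    exists z1 z2, [/\ in_pow_ideal k' z1, in_pow_ideal k' z2 & z = x * z1 + y * z2]
  else True.

Lemma in_pow_ideal0 k : in_pow_ideal k 0.
Proof. by elim: k => //= k IH; exists 0, 0; rewrite !mulr0 addr0. Qed.

Lemma in_pow_idealD k a b :
  in_pow_ideal k a -> in_pow_ideal k b -> in_pow_ideal k (a + b).
Proof.
elim: k a b => //= k IH a b [a1 [a2 [ha1 ha2 ->]]] [b1 [b2 [hb1 hb2 ->]]].
by exists (a1 + b1), (a2 + b2); split; [exact: IH | exact: IH | ring].
Qed.

Lemma in_pow_idealMl k w a : in_pow_ideal k a -> in_pow_ideal k (w * a).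
Proof.
elim: k w a => //= k IH w a [a1 [a2 [ha1 ha2 ->]]].
by exists (w * a1), (w * a2); split; [exact: IH | exact: IH | ring].
Qed.

Lemma in_pow_ideal_le k m a : (m <= k)%N -> in_pow_ideal k a -> in_pow_ideal m a.
Proof.
elim: k m a => [|k IH] [|m] a //= le_mk [a1 [a2 [ha1 ha2 ->]]].
by exists a1, a2; split; [exact: IH | exact: IH |].
Qed.

Lemma in_pow_ideal_monomial k j : (j <= k)%N -> in_pow_ideal k (x ^+ j * y ^+ (k - j)).
Proof.
elim: k j => [|k IH] [|j] //= le_jk.
  exists 0, (y ^+ k); split; first exact: in_pow_ideal0.
    by have := IH 0%N isT; rewrite mul1r subn0.
  by rewrite subn0 mulr0 add0r mul1r exprS.
exists (x ^+ j * y ^+ (k - j)), 0; split; [exact: IH | exact: in_pow_ideal0 |].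
by rewrite subSS mulr0 addr0 exprS mulrA.
Qed.

Lemma in_pow_idealM a b z w :
  in_pow_ideal a z -> in_pow_ideal b w -> in_pow_ideal (a + b) (z * w).
Proof.
elim: a z => [|a IH] z; first by move=> _; apply: in_pow_idealMl.
move=> [z1 [z2 [hz1 hz2 ->]]] hw; exists (z1 * w), (z2 * w).
by split; [exact: IH | exact: IH | ring].
Qed.

End PowIdeal.

Section HermitianCongruence.
Variables (F : finFieldType) (q : nat).
Hypothesis q_gt1 : (1 < q)%N.
Local Notation P := {poly {poly F}}.
Local Notation H := (hH F q).

Lemma hHE : H = 'X^q + ('X - ('X ^+ q.+1)%:P).
Proof. by rewrite /hH /hY /hX rmorphXn addrA. Qed.

Lemma size_hH : size H = q.+1.
Proof. by rewrite hHE size_polyDl size_polyXn // size_XsubC. Qed.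

Lemma monic_hH : H \is monic.
Proof.
by apply/monicP; rewrite hHE lead_coefDl ?lead_coefXn // size_polyXn size_XsubC.
Qed.

Let lead_coef_hH_unit : lead_coef H \is a GRing.unit.
Proof. by rewrite (eqP monic_hH) unitr1. Qed.

Lemma hredD (a b : P) : hred q (a + b) = hred q a + hred q b.
Proof. exact: Pdiv.IdomainUnit.modpD. Qed.

Lemma hredN (a : P) : hred q (- a) = - hred q a.
Proof. exact: Pdiv.IdomainUnit.modpN. Qed.

Lemma hredB (a b : P) : hred q (a - b) = hred q a - hred q b.
Proof. by rewrite hredD hredN. Qed.

Lemma hred_polyC_mul (c : {poly F}) (a : P) : hred q (c%:P * a) = c%:P * hred q a.
Proof. by rewrite !mul_polyC; exact: Pdiv.IdomainUnit.modpZl. Qed.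

Lemma divp_hH_eq (a : P) : a = (a %/ H) * H + hred q a.
Proof. exact: Pdiv.IdomainUnit.divp_eq. Qed.

Lemma size_hred (a : P) : (size (hred q a) <= q)%N.
Proof. by rewrite -ltnS -size_hH ltn_modp -size_poly_eq0 size_hH. Qed.

Lemma eqHP (a b : P) : eqH q a b <-> exists d, a = b + d * H.
Proof.
rewrite /eqH; split => [red0 | [d ->]]; last by rewrite addrC addKr /hred modp_mull.
exists ((a - b) %/ H); have := divp_hH_eq (a - b).
by rewrite red0 addr0 => <-; rewrite addrC subrK.
Qed.

Lemma hred_eqH (a b : P) : eqH q a b -> hred q a = hred q b.
Proof. by rewrite /eqH hredB => /eqP; rewrite subr_eq0 => /eqP. Qed.

Lemma eqH_hred (a : P) : eqH q a (hred q a).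
Proof. by apply/eqHP; exists (a %/ H); rewrite addrC -divp_hH_eq. Qed.

Lemma eqH_refl (a : P) : eqH q a a.
Proof. by apply/eqHP; exists 0; rewrite mul0r addr0. Qed.

Lemma eqH_sym (a b : P) : eqH q a b -> eqH q b a.
Proof. by case/eqHP=> d ->; apply/eqHP; exists (- d); rewrite mulNr addrK. Qed.

Lemma eqH_trans (a b c : P) : eqH q a b -> eqH q b c -> eqH q a c.
Proof.
by case/eqHP=> d ->; case/eqHP=> d' ->; apply/eqHP; exists (d' + d); rewrite mulrDl addrA.
Qed.

Lemma eqH_mul (a b a' b' : P) : eqH q a a' -> eqH q b b' -> eqH q (a * b) (a' * b').
Proof.
case/eqHP=> d ->; case/eqHP=> d' ->; apply/eqHP.
by exists (a' * d' + d * b' + d * d' * H); ring.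
Qed.

Lemma eqH_polyC_mulI (c : {poly F}) (a b : P) :
  c != 0 -> eqH q (c%:P * a) (c%:P * b) -> eqH q a b.
Proof.
move=> c_neq0; rewrite /eqH -mulrBr hred_polyC_mul => /eqP.
by rewrite mulf_eq0 polyC_eq0 (negPf c_neq0) => /eqP.
Qed.

End HermitianCongruence.

Section HermitianOrder.
Variables (F : finFieldType) (q : nat).
Hypothesis q_gt1 : (1 < q)%N.
Local Notation P := {poly {poly F}}.
Local Notation H := (hH F q).
Local Notation pt := (hpoint F q).
Implicit Types (Q : pt) (p z : P).

Lemma hevD p p' Q : hevP (p + p') Q = hevP p Q + hevP p' Q.
Proof. by rewrite /hevP /hev !hornerE. Qed.

Lemma hevB p p' Q : hevP (p - p') Q = hevP p Q - hevP p' Q.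
Proof. by rewrite /hevP /hev !hornerE. Qed.

Lemma hevM p p' Q : hevP (p * p') Q = hevP p Q * hevP p' Q.
Proof. by rewrite /hevP /hev !hornerE. Qed.

Lemma hevX p n Q : hevP (p ^+ n) Q = hevP p Q ^+ n.
Proof. by rewrite /hevP /hev !hornerE. Qed.

Lemma hevC (c : F) Q : hevP c%:P%:P Q = c.
Proof. by rewrite /hevP /hev !hornerE. Qed.

Lemma hev1 Q : hevP 1 Q = 1.
Proof. by rewrite /hevP /hev !hornerE. Qed.

Lemma hev_sum I (r : seq I) (Pr : pred I) (g : I -> P) Q :
  hevP (\sum_(i <- r | Pr i) g i) Q = \sum_(i <- r | Pr i) hevP (g i) Q.
Proof.
have hev0 : hevP 0 Q = 0 by rewrite /hevP /hev !hornerE.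
exact: (big_morph _ (fun a b => hevD a b Q) hev0).
Qed.

Lemma hev_hX Q : hevP (hX F) Q = (val Q).1.
Proof. by rewrite /hevP /hev /hX !hornerE. Qed.

Lemma hev_hY Q : hevP (hY F) Q = (val Q).2.
Proof. by rewrite /hevP /hev /hY !hornerE. Qed.

Lemma hev_hH Q : hevP H Q = 0.
Proof.
rewrite /hH hevB hevD !hevX hev_hX hev_hY.
by case: Q => [[a b] /= /eqP ->]; rewrite subrr.
Qed.

Lemma hev_eqH p p' Q : eqH q p p' -> hevP p Q = hevP p' Q.
Proof. by case/(eqHP q_gt1) => d ->; rewrite hevD hevM hev_hH mulr0 addr0. Qed.

Definition xsub Q : P := hX F - (val Q).1%:P%:P.
Definition ysub Q : P := hY F - (val Q).2%:P%:P.

Lemma hev_xsub Q : hevP (xsub Q) Q = 0.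
Proof. by rewrite hevB hev_hX hevC subrr. Qed.

Lemma hev_ysub Q : hevP (ysub Q) Q = 0.
Proof. by rewrite hevB hev_hY hevC subrr. Qed.

Lemma xsubE Q : xsub Q = ('X - (val Q).1%:P)%:P.
Proof. by rewrite /xsub /hX rmorphB. Qed.

Lemma hev_in_pow_ideal Q k z : in_pow_ideal (xsub Q) (ysub Q) k.+1 z -> hevP z Q = 0.
Proof.
by move=> [z1 [z2 [_ _ ->]]]; rewrite hevD !hevM hev_xsub hev_ysub !mul0r addr0.
Qed.

(* v_Q(p) >= k, as in [vge] but with the power of the maximal ideal at Q
   built recursively, which makes it stable under products. *)
Definition ord_ge p Q k : Prop :=
  exists2 u, hevP u Q != 0 &
    exists2 z : P, in_pow_ideal (xsub Q) (ysub Q) k z & eqH q (u * p) z.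

Lemma ord_ge_vge p Q s : vge p Q s -> ord_ge p Q s.
Proof.
case=> [u [d [c [hu def_up]]]]; exists u => //.
exists (\sum_(k < s.+1) c k * xsub Q ^+ k * ysub Q ^+ (s - k)).
  apply: (big_ind (in_pow_ideal _ _ s)); [exact: in_pow_ideal0 | exact: in_pow_idealD |].
  move=> k _; rewrite -mulrA; apply: in_pow_idealMl.
  by apply: in_pow_ideal_monomial; rewrite -ltnS.
by apply/(eqHP q_gt1); exists d.
Qed.

Lemma ord_ge0 p Q : ord_ge p Q 0.
Proof. by exists 1; rewrite ?hev1 ?oner_neq0 //; exists (1 * p) => //; apply: eqH_refl. Qed.

Lemma ord_ge_le p Q k m : (m <= k)%N -> ord_ge p Q k -> ord_ge p Q m.
Proof.
by move=> le_mk [u hu [z hz eq_z]]; exists u => //; exists z => //; apply: in_pow_ideal_le hz.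
Qed.

Lemma ord_geM p p' Q k k' :
  ord_ge p Q k -> ord_ge p' Q k' -> ord_ge (p * p') Q (k + k').
Proof.
move=> [u hu [z hz eq_z]] [u' hu' [z' hz' eq_z']].
exists (u * u'); first by rewrite hevM mulf_neq0.
exists (z * z'); first exact: in_pow_idealM.
have -> : u * u' * (p * p') = (u * p) * (u' * p') by ring.
exact: eqH_mul.
Qed.

Lemma ord_geMl w p Q k : ord_ge p Q k -> ord_ge (w * p) Q k.
Proof. by rewrite -[k]add0n; apply: ord_geM; apply: ord_ge0. Qed.

Lemma ord_ge_prod h (g : 'I_h -> P) (n : 'I_h -> nat) Q :
  (forall mu, ord_ge (g mu) Q 1) ->
  ord_ge (\prod_(mu < h) g mu ^+ n mu) Q (\sum_(mu < h) n mu).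
Proof.
move=> ord_g; apply: (big_rec2 (fun k p => ord_ge p Q k)); first exact: ord_ge0.
move=> mu k p _; apply: ord_geM; elim: (n mu) => [|m IH]; first exact: ord_ge0.
by rewrite exprS -add1n; apply: ord_geM.
Qed.

Lemma ord_ge_eqH p p' Q k : eqH q p p' -> ord_ge p Q k -> ord_ge p' Q k.
Proof.
move=> eq_p [u hu [z hz eq_z]]; exists u => //; exists z => //.
apply: (eqH_trans q_gt1) eq_z.
exact: (eqH_mul q_gt1 (eqH_refl q_gt1 u) (eqH_sym q_gt1 eq_p)).
Qed.

Lemma ord_ge_root p Q k : ord_ge p Q k.+1 -> hevP p Q = 0.
Proof.
move=> [u hu [z hz eq_z]]; have := hev_eqH Q eq_z.
by rewrite (hev_in_pow_ideal hz) hevM => /eqP; rewrite mulf_eq0 (negPf hu) => /eqP.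
Qed.

Lemma ord_ge1 z Q : hevP z Q = 0 -> ord_ge z Q 1.
Proof.
set a := (val Q).1; set b := (val Q).2 => z_Q.
have /factor_theorem [wy def_z] : root (z - (z.[b%:P])%:P) b%:P.
  by rewrite /root !hornerE subrr.
have /factor_theorem [wx def_zb] : root z.[b%:P] a by exact/eqP.
exists 1; first by rewrite hev1 oner_neq0.
exists z; last by rewrite mul1r; apply: eqH_refl.
exists wx%:P, wy; split => //.
rewrite xsubE /ysub /hY -/a -/b mulrC -rmorphM -def_zb mulrC -def_z.
by rewrite addrC subrK.
Qed.

Lemma ord_ge_unit_mull w p Q k : hevP w Q != 0 -> ord_ge (w * p) Q k -> ord_ge p Q k.
Proof.
move=> hw [u hu [z hz eq_z]]; exists (u * w); first by rewrite hevM mulf_neq0.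
by exists z; rewrite -?mulrA.
Qed.

Lemma ord_ge_key_product h s (e : 'I_h -> pt -> F) (Lam : P) (f R : 'I_h -> P)
    (n : 'I_h -> nat) Q :
  ([exists i, e i Q != 0] -> vge Lam Q s) ->
  (forall i, hevP (R i) Q = hevP (f i) Q + e i Q) ->
  (\sum_(mu < h) n mu <= s)%N ->
  ord_ge (Lam * \prod_(mu < h) (f mu - R mu) ^+ n mu) Q (\sum_(mu < h) n mu).
Proof.
move=> Lam_Q R_Q le_s; have [/Lam_Q vge_Lam | no_error] := boolP [exists i, e i Q != 0].
  by rewrite mulrC; apply/ord_geMl/(ord_ge_le le_s)/ord_ge_vge.
apply/ord_geMl/ord_ge_prod => mu; apply: ord_ge1.
by move/existsPn: no_error => /(_ mu); rewrite negbK hevB R_Q => /eqP ->; rewrite addr0 subrr.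
Qed.

End HermitianOrder.

Section LocalParameter.
Variables (F : finFieldType) (q : nat).
Hypotheses (q_gt1 : (1 < q)%N) (q_char : (q%:R : F) = 0).
Local Notation P := {poly {poly F}}.
Local Notation H := (hH F q).
Local Notation pt := (hpoint F q).
Implicit Types (Q : pt) (w z : P).

(* These make X - a a local parameter at Q = (a, b), see [ysub_cofY];
   cofY(Q) = 1 because q = 0 in F. *)
Definition cofY Q : P := \sum_(i < q) hY F ^+ (q.-1 - i) * (val Q).2%:P%:P ^+ i + 1.
Definition cofX Q : P := \sum_(i < q.+1) hX F ^+ (q - i) * (val Q).1%:P%:P ^+ i.

Lemma ysub_cofY Q : ysub Q * cofY Q = xsub Q * cofX Q + H.
Proof.
rewrite /cofY mulrDr mulr1 /ysub /xsub /cofX -!subrXX /hH.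
case: Q => [[a b] /= /eqP on_curve].
have -> : (a%:P%:P : P) ^+ q.+1 = b%:P%:P ^+ q + b%:P%:P.
  by rewrite -!rmorphXn -!rmorphD on_curve.
ring.
Qed.

Lemma hev_cofY Q : hevP (cofY Q) Q = 1.
Proof.
rewrite /cofY hevD hev1 hev_sum (eq_bigr (fun _ => (val Q).2 ^+ q.-1)).
  by rewrite sumr_const card_ord -mulr_natr q_char mulr0 add0r.
move=> i _; rewrite hevM !hevX hev_hY hevC -exprD subnK //.
by rewrite -ltnS prednK ?(ltn_ord i) // ltnW.
Qed.

Lemma in_pow_ideal_cofY Q k z : in_pow_ideal (xsub Q) (ysub Q) k z ->
  exists w, eqH q (cofY Q ^+ k * z) (xsub Q ^+ k * w).
Proof.
elim: k z => [|k IH] z /=; first by exists z; apply: eqH_refl.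
move=> [z1 [z2 [/IH [w1 /(eqHP q_gt1) [d1 eq1]] /IH [w2 /(eqHP q_gt1) [d2 eq2]] ->]]].
exists (cofY Q * w1 + cofX Q * w2); apply/(eqHP q_gt1).
exists (xsub Q * cofY Q * d1 + (xsub Q * cofX Q + H) * d2 + xsub Q ^+ k * w2).
have -> : cofY Q ^+ k.+1 * (xsub Q * z1 + ysub Q * z2) =
  xsub Q * cofY Q * (cofY Q ^+ k * z1) + (ysub Q * cofY Q) * (cofY Q ^+ k * z2).
  by rewrite exprS; ring.
by rewrite eq1 eq2 ysub_cofY exprS; ring.
Qed.

Lemma ord_ge_divX w Q k : ord_ge (xsub Q * w) Q k.+1 -> ord_ge w Q k.
Proof.
move=> [u hu [z /in_pow_ideal_cofY [v eq_v] eq_z]].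
exists (cofY Q ^+ k.+1 * u); first by rewrite hevM hevX hev_cofY expr1n mul1r.
exists (xsub Q ^+ k * v).
  rewrite mulrC; apply: in_pow_idealMl.
  by have := in_pow_ideal_monomial (xsub Q) (ysub Q) (leqnn k); rewrite subnn mulr1.
apply: (@eqH_polyC_mulI _ _ q_gt1 ('X - (val Q).1%:P)); first by rewrite polyXsubC_eq0.
rewrite -xsubE.
have := eqH_trans q_gt1 (eqH_mul q_gt1 (eqH_refl q_gt1 (cofY Q ^+ k.+1)) eq_z) eq_v.
by congr eqH; [ring | rewrite exprS; ring].
Qed.

End LocalParameter.

Lemma card_roots_lt (R : finIdomainType) (p : {poly R}) :
  p != 0 -> (#|[set x | root p x]| < size p)%N.
Proof.
move=> p_neq0; rewrite cardE; apply: max_poly_roots p_neq0 _ (enum_uniq _).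
by apply/allP => x; rewrite mem_enum inE.
Qed.

Section Vanishing.
Variables (F : finFieldType) (q : nat).
Hypotheses (q_gt1 : (1 < q)%N) (card_F : #|F| = (q ^ 2)%N).
Hypothesis frobD : forall x y : F, (x + y) ^+ q = x ^+ q + y ^+ q.
Local Notation P := {poly {poly F}}.
Local Notation pt := (hpoint F q).
Implicit Types (Q : pt) (p : P).

Lemma hGE : hG F q = ('X^(q ^ 2) - 'X : {poly F})%:P.
Proof. by rewrite /hG /hX polyCB polyC_exp. Qed.

Let frobN (x : F) : (- x) ^+ q = - x ^+ q.
Proof.
have : (x + - x) ^+ q = 0 by rewrite subrr expr0n gtn_eqF // ltnW.
by rewrite frobD addrC => /eqP; rewrite addr_eq0 => /eqP.
Qed.

Let frobK (x : F) : (x ^+ q) ^+ q = x.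
Proof. by rewrite -exprM mulnn -card_F expf_card. Qed.

(* y |-> y^q + y - c commutes with the q-th power map when c^q = c, so every
   y is a root of T or of T^(q-1) - 1, and the latter has at most q(q-1). *)
Lemma card_hermitian_fibre (a : F) :
  (q <= #|[set y : F | (y ^+ q + y == a ^+ q.+1)%R]|)%N.
Proof.
set c := a ^+ q.+1.
have cq : c ^+ q = c by rewrite /c -exprM mulSn exprD exprM frobK -exprSr.
pose T : {poly F} := 'X^q + 'X - c%:P.
have T_eval x : T.[x] = x ^+ q + x - c by rewrite /T !hornerE.
have size_T : size T = q.+1.
  by rewrite /T -addrA size_polyDl size_polyXn // size_XsubC.
have T_neq0 : T != 0 by rewrite -size_poly_eq0 size_T.
clearbody T.
pose S := T ^+ q.-1 - 1.
have size_S : size S = (q * q.-1).+1.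
  have size_Tq : size (T ^+ q.-1) = (q * q.-1).+1.
    by rewrite -[LHS]prednK ?size_exp ?size_T // lt0n size_poly_eq0 expf_neq0.
  rewrite /S size_polyDl size_Tq // size_polyN size_polyC oner_neq0 ltnS.
  by rewrite muln_gt0 ltnW // -ltnS prednK // ltnW.
have TS_root y : root T y || root S y.
  rewrite /root -mulf_eq0 /S hornerD hornerN horner_exp hornerC mulrBr mulr1 -exprS.
  rewrite prednK ?(ltnW q_gt1) // T_eval !frobD frobN frobK cq; apply/eqP; ring.
have card_S : (#|[set y | root S y]| < size S)%N.
  by apply: card_roots_lt; rewrite -size_poly_eq0 size_S.
have card_F_le : (#|F| <= #|[set y | root T y]| + #|[set y | root S y]|)%N.
  rewrite -cardsT; apply: leq_trans (leq_card_setU _ _).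
  by apply/subset_leq_card/subsetP => y _; rewrite !inE TS_root.
have -> : [set y : F | y ^+ q + y == c] = [set y | root T y].
  by apply/setP => y; rewrite !inE /root T_eval subr_eq0.
move: card_F_le card_S; rewrite card_F size_S ltnS -mulnn.
have -> : (q * q = q + q * q.-1)%N by rewrite addnC -mulnSr prednK // ltnW.
lia.
Qed.

Lemma hG_prod : ('X^(q ^ 2) - 'X : {poly F}) = \prod_x ('X - x%:P).
Proof. by rewrite -card_F finField_genPoly. Qed.

Lemma hred_coef_root p : (forall Q, hevP p Q = 0) ->
  forall (a : F) j, root (hred q p)`_j a.
Proof.
move=> p_vanish a j; set r := hred q p.
pose ra := map_poly (horner_eval a) r.
suff ra0 : ra = 0.
  by apply/eqP; move: (congr1 (fun s : {poly F} => s`_j) ra0); rewrite coef_map coef0.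
set A := [set y : F | y ^+ q + y == a ^+ q.+1].
apply: (@roots_geq_poly_eq0 _ _ (enum A)); last first.
- rewrite -cardE; apply: leq_trans _ (card_hermitian_fibre a).
  exact: leq_trans (size_poly _ _) (size_hred q_gt1 p).
- exact: enum_uniq.
apply/allP => y; rewrite mem_enum inE => on_curve.
have := p_vanish (exist _ (a, y) on_curve).
rewrite (hev_eqH q_gt1 _ (eqH_hred q_gt1 p)) /hevP /hev /= => r_ay.
have := horner_map (horner_eval a) r y%:P.
by rewrite /root /ra /= !horner_evalE hornerC => ->; rewrite r_ay.
Qed.

Lemma eqH_hG_mul_of_vanishing p : (forall Q, hevP p Q = 0) ->
  exists p1, eqH q p (hG F q * p1).
Proof.
move=> p_vanish; set g : {poly F} := 'X^(q ^ 2) - 'X; set r := hred q p.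
have g_dvd j : g %| r`_j.
  rewrite /g hG_prod -big_enum /=; apply: uniq_roots_dvdp.
    by apply/allP => x _; apply: hred_coef_root.
  by rewrite uniq_rootsE enum_uniq.
exists (\poly_(j < size r) (r`_j %/ g)); apply: (eqH_trans q_gt1) (eqH_hred q_gt1 p) _.
suff -> : hG F q * \poly_(j < size r) (r`_j %/ g) = r by apply: eqH_refl.
apply/polyP => j; rewrite hGE coefCM coef_poly.
by case: ltnP => j_lt; [rewrite mulrC divpK | rewrite mulr0 nth_default].
Qed.

Definition hG_cofactor Q : P := (\prod_(x | x != (val Q).1) ('X - x%:P))%:P.

Lemma hG_split Q : hG F q = xsub Q * hG_cofactor Q.
Proof. by rewrite hGE hG_prod (bigD1 (val Q).1) //= polyCM xsubE. Qed.

Lemma hev_hG_cofactor Q : hevP (hG_cofactor Q) Q != 0.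
Proof.
rewrite /hevP /hev /hG_cofactor hornerC horner_prod; apply/prodf_neq0 => x x_neq.
by rewrite !hornerE subr_eq0 eq_sym.
Qed.

Hypothesis q_char : (q%:R : F) = 0.

Lemma eqH_hGX_mul_of_ord_ge k p : (forall Q, ord_ge p Q k) ->
  exists om, eqH q p (hG F q ^+ k * om).
Proof.
elim: k p => [|k IH] p ord_p.
  by exists p; rewrite expr0 mul1r; apply: eqH_refl.
have [p1 eq_p1] : exists p1, eqH q p (hG F q * p1).
  by apply: eqH_hG_mul_of_vanishing => Q; apply: ord_ge_root (ord_p Q).
have [om eq_om] : exists om, eqH q p1 (hG F q ^+ k * om).
  apply: IH => Q; have := ord_ge_eqH q_gt1 eq_p1 (ord_p Q).
  rewrite (hG_split Q) -mulrA => /(ord_ge_divX q_gt1 q_char).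
  exact: ord_ge_unit_mull (hev_hG_cofactor Q).
exists om; apply: (eqH_trans q_gt1 eq_p1); rewrite exprS -mulrA.
exact: (eqH_mul q_gt1 (eqH_refl q_gt1 _) eq_om).
Qed.

End Vanishing.

Lemma coef_neq0_lt_size (R : nzRingType) (p : {poly R}) i : p`_i != 0 -> (i < size p)%N.
Proof. by rewrite ltnNge; apply: contra => /(nth_default 0) ->. Qed.

Lemma sum_neq0_exists (R : nzRingType) n (g : 'I_n -> R) :
  \sum_(l < n) g l != 0 -> exists l, g l != 0.
Proof.
move=> sum_neq0; suff /existsP [l g_l] : [exists l, g l != 0] by exists l.
apply: contraNT sum_neq0 => /existsPn g0; rewrite big1 // => l _.
by apply/eqP; move: (g0 l); rewrite negbK.
Qed.

Section WeightedDegree.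
Variables (F : finFieldType) (q : nat).
Hypothesis q_gt1 : (1 < q)%N.
Local Notation P := {poly {poly F}}.
Implicit Types (p r : P).

(* A bound on deg_H that makes sense for every representative, reduced or not. *)
Definition wdeg_le p n :=
  forall j i, (p`_j)`_i != 0 -> (i * q + j * q.+1 <= n)%N.

Lemma degH_le_wdeg p n : (degH q p <= n)%N <-> wdeg_le (hred q p) n.
Proof.
rewrite /degH /hcoef; split=> [le_n j i nz_ji | wdeg_p].
  have lt_i := coef_neq0_lt_size nz_ji.
  have lt_j : (j < size (hred q p))%N.
    by apply: coef_neq0_lt_size; apply: contraNneq nz_ji => ->; rewrite coef0.
  apply: leq_trans le_n; apply: leq_trans (leq_bigmax (Ordinal lt_j)).
  exact: (leq_bigmax_cond (Ordinal lt_i) nz_ji).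
by apply/bigmax_leqP => j _; apply/bigmax_leqP => i; apply: wdeg_p.
Qed.

Lemma wdeg_le_trans p m n : wdeg_le p m -> (m <= n)%N -> wdeg_le p n.
Proof. by move=> wdeg_p le_mn j i /wdeg_p /leq_trans; apply. Qed.

Lemma wdeg_le1 : wdeg_le 1 0.
Proof. by move=> [|j] [|i]; rewrite ?coef1 //= ?coef0 ?eqxx. Qed.

Lemma wdeg_leD p r n : wdeg_le p n -> wdeg_le r n -> wdeg_le (p + r) n.
Proof.
move=> wdeg_p wdeg_r j i; rewrite !coefD.
by have [-> | /wdeg_p //] := eqVneq (p`_j)`_i 0; rewrite add0r => /wdeg_r.
Qed.

Lemma wdeg_leN p n : wdeg_le p n -> wdeg_le (- p) n.
Proof. by move=> wdeg_p j i; rewrite !coefN oppr_eq0; apply: wdeg_p. Qed.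

Lemma wdeg_leM p r m n : wdeg_le p m -> wdeg_le r n -> wdeg_le (p * r) (m + n).
Proof.
move=> wdeg_p wdeg_r j i; rewrite coefM coef_sum => /sum_neq0_exists [l].
rewrite coefM => /sum_neq0_exists [t]; rewrite mulf_eq0 negb_or => /andP [/wdeg_p le_m /wdeg_r le_n].
have le_lj : (l <= j)%N by rewrite -ltnS.
have le_ti : (t <= i)%N by rewrite -ltnS.
rewrite -(subnKC le_lj) -(subnKC le_ti) !mulnDl.
by move: le_m le_n; lia.
Qed.

Lemma wdeg_leX p m k : wdeg_le p m -> wdeg_le (p ^+ k) (k * m).
Proof.
move=> wdeg_p; elim: k => [|k IH]; first exact: wdeg_le1.
by rewrite exprS mulSn; apply: wdeg_leM.
Qed.

Lemma wdeg_le_polyC (c : {poly F}) : wdeg_le c%:P ((size c).-1 * q).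
Proof.
move=> [|j] i; rewrite coefC ?coef0 ?eqxx //= => nz_i.
rewrite mul0n addn0 leq_mul2r; have := coef_neq0_lt_size nz_i.
by case: (size c) => // s; rewrite ltnS => ->; rewrite orbT.
Qed.

Lemma wdeg_le_Xn k : wdeg_le 'X^k (k * q.+1).
Proof.
move=> j i; rewrite coefXn; have [-> | _] := eqVneq j k; last by rewrite coef0 eqxx.
by rewrite coef1; case: i => [|i] /=; rewrite ?mul0n ?eqxx.
Qed.

Lemma wdeg_le_hX : wdeg_le (hX F) q.
Proof. by have := wdeg_le_polyC (c := 'X); rewrite size_polyX mul1n. Qed.

(* One step of division by the monic H: the leading term c Y^M (M >= q) of p
   is replaced by c Y^(M-q) (X^(q+1) - Y), of no larger weight. *)
Lemma wdeg_le_reduce_step p n : (q < size p)%N -> wdeg_le p n ->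
  exists p', [/\ eqH q p p', (size p' < size p)%N & wdeg_le p' n].
Proof.
move=> lt_q_size wdeg_p; set M := (size p).-1; set c := p`_M.
have size_p : size p = M.+1 by rewrite prednK // (leq_ltn_trans _ lt_q_size).
have le_qM : (q <= M)%N by rewrite -ltnS -size_p.
have c_neq0 : c != 0 by rewrite /c /M -lead_coefE lead_coef_eq0 -size_poly_eq0 size_p.
set t : P := hX F ^+ q.+1 - 'X.
have t_coef j : (1 < j)%N -> t`_j = 0.
  move=> lt1j; rewrite coefB coefX /hX -polyC_exp coefC.
  by rewrite !gtn_eqF ?subr0 // ltnW.
exists (p - c%:P * 'X^M + c%:P * 'X^(M - q) * t); split.
- apply/(eqHP q_gt1); exists (c%:P * 'X^(M - q)).
  have -> : 'X^M = 'X^(M - q) * 'X^q :> P by rewrite -exprD subnK.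
  by rewrite /t /hH /hY; ring.
- rewrite size_p ltnS; apply/leq_sizeP => j le_Mj.
  rewrite coefD coefB coefCM coefXn -mulrA coefCM coefXnM ltnNge leq_subLR.
  rewrite (leq_trans le_Mj) ?leq_addl // t_coef ?mulr0 ?addr0; last by lia.
  have [-> | ne_jM] := eqVneq j M; first by rewrite mulr1 subrr.
  by rewrite mulr0 subr0 nth_default // size_p ltn_neqAle eq_sym ne_jM.
apply: wdeg_leD.
  move=> j i; rewrite coefB coefCM coefXn.
  have [-> | _] := eqVneq j M; first by rewrite mulr1 subrr coef0 eqxx.
  by rewrite mulr0 subr0; apply: wdeg_p.
have wdeg_c : ((size c).-1 * q + M * q.+1 <= n)%N.
  by apply: wdeg_p; rewrite -lead_coefE lead_coef_eq0.
have wdeg_t : wdeg_le t (q.+1 * q).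
  apply: wdeg_leD; first exact: wdeg_leX wdeg_le_hX.
  have := wdeg_le_Xn (k := 1); rewrite expr1 mul1n => wdeg_X.
  by apply/wdeg_leN/(wdeg_le_trans wdeg_X); rewrite leq_pmulr // ltnW.
have wdeg_ct : wdeg_le (c%:P * 'X^(M - q) * t)
    ((size c).-1 * q + (M - q) * q.+1 + q.+1 * q).
  by apply: wdeg_leM wdeg_t; apply: wdeg_leM; [exact: wdeg_le_polyC | exact: wdeg_le_Xn].
apply: wdeg_le_trans wdeg_ct _; apply: leq_trans wdeg_c.
by rewrite -addnA leq_add2l [(q.+1 * q)%N]mulnC -mulnDl subnK.
Qed.

Lemma wdeg_le_hred p n : wdeg_le p n -> wdeg_le (hred q p) n.
Proof.
have [m] := ubnP (size p); elim: m p => // m IH p; rewrite ltnS => le_size wdeg_p.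
have [le_size_q | /wdeg_le_reduce_step] := leqP (size p) q.
  by rewrite /hred modp_small ?size_hH.
case/(_ n wdeg_p) => p' [eq_p lt_size wdeg_p'].
by rewrite (hred_eqH q_gt1 eq_p); apply: IH => //; apply: leq_trans lt_size le_size.
Qed.

Lemma degH_eqH p r : eqH q p r -> degH q p = degH q r.
Proof. by rewrite /degH /hcoef => /(hred_eqH q_gt1) ->. Qed.

Lemma degH1 : degH q (1 : P) = 0%N.
Proof.
by apply/eqP; rewrite -leqn0; apply/degH_le_wdeg/wdeg_le_hred/wdeg_le1.
Qed.

Lemma degHB_le p r : (degH q (p - r) <= maxn (degH q p) (degH q r))%N.
Proof.
apply/degH_le_wdeg; rewrite hredB //; apply: wdeg_leD; last apply: wdeg_leN.
  by apply/degH_le_wdeg; rewrite leq_maxl.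
by apply/degH_le_wdeg; rewrite leq_maxr.
Qed.

Lemma degHM_le p r : (degH q (p * r) <= degH q p + degH q r)%N.
Proof.
apply/degH_le_wdeg.
rewrite (hred_eqH q_gt1 (eqH_mul q_gt1 (eqH_hred q_gt1 p) (eqH_hred q_gt1 r))).
by apply/wdeg_le_hred/wdeg_leM; apply/degH_le_wdeg.
Qed.

Lemma degH_prod_le h (g : 'I_h -> P) (k : 'I_h -> nat) d :
  (forall mu, degH q (g mu) <= d)%N ->
  (degH q (\prod_(mu < h) g mu ^+ k mu) <= (\sum_(mu < h) k mu) * d)%N.
Proof.
move=> deg_g; rewrite big_distrl /=.
apply: (big_rec2 (fun n r => degH q r <= n)%N); first by rewrite degH1.
move=> mu n r _ deg_r; apply: leq_trans (degHM_le _ _) _; rewrite leq_add //.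
elim: (k mu) => [|m IH]; first by rewrite degH1.
by rewrite exprS mulSn; apply: leq_trans (degHM_le _ _) _; rewrite leq_add.
Qed.

Lemma degH_polyC_mul_le (c : {poly F}) p n : c != 0 ->
  (degH q (c%:P * p) <= (size c).-1 * q + n)%N -> (degH q p <= n)%N.
Proof.
move=> c_neq0 /degH_le_wdeg; rewrite hred_polyC_mul // => wdeg_cp.
apply/degH_le_wdeg => j i; set d := (hred q p)`_j => nz_ji.
have d_neq0 : d != 0 by apply: contraNneq nz_ji => ->; rewrite coef0.
have le_iq : (i * q <= (size d).-1 * q)%N.
  by rewrite leq_mul2r -ltnS prednK ?size_poly_gt0 // coef_neq0_lt_size ?orbT.
have size_cd : ((size c).-1 + (size d).-1 = (size (c * d)%R).-1)%N.
  rewrite size_mul //; move: c_neq0 d_neq0; rewrite -!size_poly_gt0.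
  by case: (size c) => // a; case: (size d) => // b; rewrite addSn addnS.
have := wdeg_cp j ((size c).-1 + (size d).-1)%N.
rewrite coefCM size_cd -lead_coefE lead_coefM mulf_neq0 ?lead_coef_eq0 // => /(_ isT).
by rewrite -size_cd !mulnDl; lia.
Qed.

End WeightedDegree.

Section HermitianG.
Variables (F : finFieldType) (q : nat).
Hypothesis q_gt1 : (1 < q)%N.
Local Notation P := {poly {poly F}}.
Local Notation g := ('X^(q ^ 2) - 'X : {poly F}).

Lemma hGXE k : hG F q ^+ k = (g ^+ k)%:P.
Proof. by rewrite hGE polyC_exp. Qed.

Lemma size_hG_poly : size g = (q ^ 2).+1.
Proof.
rewrite size_polyDl size_polyXn // size_polyN size_polyX ltnS.
by rewrite (leq_trans q_gt1) // -{1}(expn1 q) leq_exp2l // ltnW.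
Qed.

Lemma hG_polyX_neq0 k : g ^+ k != 0.
Proof. by rewrite expf_neq0 // -size_poly_eq0 size_hG_poly. Qed.

Lemma eqH_hGX_mulI k (p r : P) : eqH q (hG F q ^+ k * p) (hG F q ^+ k * r) -> eqH q p r.
Proof. by rewrite hGXE; apply: (eqH_polyC_mulI q_gt1 (hG_polyX_neq0 k)). Qed.

Lemma degH_hGX_mul_le k (p : P) n :
  (degH q (hG F q ^+ k * p) <= k * q ^ 3 + n)%N -> (degH q p <= n)%N.
Proof.
rewrite hGXE => deg_le; apply: (degH_polyC_mul_le q_gt1 (hG_polyX_neq0 k)).
have := size_exp g k; rewrite size_hG_poly /= => ->.
by rewrite mulnAC -expnSr mulnC.
Qed.

End HermitianG.

Section FiniteFieldChar.
Variables (F : finFieldType) (q : nat).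
Hypothesis card_F : #|F| = (q ^ 2)%N.

Lemma pchar_nat_card_sqrt : [pchar F].-nat q.
Proof.
have [p _ p_char] := finPcharP F.
have : p.-nat q.
  have := abelem_pgroup (fin_ring_pchar_abelem p_char).
  by rewrite pgroupE cardsT card_F pnatX orbF.
by apply: sub_in_pnat => r _; rewrite inE /= => /eqP ->.
Qed.

Lemma exprDn_card_sqrt (x y : F) : (x + y) ^+ q = x ^+ q + y ^+ q.
Proof. exact/exprDn_pchar/pchar_nat_card_sqrt. Qed.

Lemma natr_card_sqrt : (1 < q)%N -> (q%:R : F) = 0.
Proof.
move=> q_gt1; have [p _ p_char] := finPcharP F.
have : pdiv q \in [pchar F] by apply: pnatPpi pchar_nat_card_sqrt _; rewrite pi_pdiv.
rewrite (pcharf_eq p_char) inE /= => /eqP p_pdiv.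
by apply/eqP; rewrite -(dvdn_pcharf p_char) -p_pdiv pdiv_dvd.
Qed.

End FiniteFieldChar.

Lemma genus_gt0 q : (1 < q)%N -> (0 < genus q)%N.
Proof. by move=> q_gt1; rewrite /genus divn_gt0 // -[2%N]muln1 leq_mul // subn_gt0. Qed.

Theorem lemma4 (F : finFieldType) (q : nat) (hF : #|F| = (q ^ 2)%N)
  (h : nat) (hh : (1 <= h)%N) (mH : nat)
  (hmH1 : (2 * genus q - 2 < mH)%N) (hmH2 : (mH < q ^ 3)%N)
  (f : 'I_h -> {poly {poly F}}) (hf : forall i, (degH q (f i) <= mH)%N)
  (e : 'I_h -> hpoint F q -> F)
  (s : nat) (hs : (0 < s)%N)
  (Lam : {poly {poly F}})
  (hLam_mon : monicH q Lam)
  (hLam_in : forall P : hpoint F q, [exists i, e i P != 0] -> vge Lam P s)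
  (hLam_min : forall L : {poly {poly F}}, ~ eqH q L 0 ->
     (forall P : hpoint F q, [exists i, e i P != 0] -> vge L P s) ->
     (degH q Lam <= degH q L)%N)
  (Rr : 'I_h -> {poly {poly F}})
  (hRdeg : forall i, (degH q (Rr i) < q ^ 3 + 2 * genus q)%N)
  (hRev : forall i (P : hpoint F q), hevP (Rr i) P = hevP (f i) P + e i P)
  (ii : 'I_h -> nat) (hii : (\sum_(mu < h) ii mu <= s)%N) :
  let k := (\sum_(mu < h) ii mu)%N in
  let bound := (degH q Lam + k * (2 * genus q - 1))%N in
  let lhs := Lam * \prod_(mu < h) (f mu - Rr mu) ^+ ii mu in
  exists Om : {poly {poly F}},
    [/\ (degH q Om <= bound)%N,
        eqH q lhs (hG F q ^+ k * Om) &
        forall Om' : {poly {poly F}},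
          (degH q Om' <= bound)%N -> eqH q lhs (hG F q ^+ k * Om') ->
          eqH q Om Om'].
Proof.
move=> k bound lhs.
have q_gt1 : (1 < q)%N by have := finNzRing_gt1 F; rewrite hF; case: (q) => [|[|]].
have ord_lhs (Q : hpoint F q) : ord_ge lhs Q k.
  exact: (ord_ge_key_product q_gt1 (hLam_in Q) (hRev ^~ Q) hii).
have [om eq_om] := eqH_hGX_mul_of_ord_ge q_gt1 hF (exprDn_card_sqrt hF)
  (natr_card_sqrt hF q_gt1) ord_lhs.
exists om; split=> // [|om' _ eq_om']; last first.
  exact: (eqH_hGX_mulI q_gt1 (eqH_trans q_gt1 (eqH_sym q_gt1 eq_om) eq_om')).
pose D := (q ^ 3 + 2 * genus q - 1)%N.
have deg_fR mu : (degH q (f mu - Rr mu) <= D)%N.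
  apply: leq_trans (degHB_le q_gt1 _ _) _; rewrite geq_max.
  by have := hf mu; have := hRdeg mu; have := genus_gt0 q_gt1; lia.
have deg_lhs : (degH q lhs <= degH q Lam + k * D)%N.
  exact: leq_trans (degHM_le q_gt1 _ _) (leq_add (leqnn _) (degH_prod_le q_gt1 _ deg_fR)).
apply: (degH_hGX_mul_le q_gt1 (k := k)); rewrite -(degH_eqH q_gt1 eq_om).
apply: leq_trans deg_lhs _; rewrite /bound /D addnCA leq_add2l -mulnDr.
by rewrite addnBA // muln_gt0 genus_gt0.
Qed.
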